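(* Let $(G,P,g)$ be the manifold in the context. Then the Weyl tensor of the Levi-Civita connection of $g$ vanishes, i.e. $(G,g)$ is conformally flat.
   Context: $G$ is a 4-dimensional real connected Lie group with Lie algebra having a basis $\{X_1,\dots,X_4\}$ of left-invariant vector fields satisfying, for real numbers $\lambda_1,\dots,\lambda_4$: $[X_1,X_2]=-[X_3,X_4]=\lambda_1X_1+\lambda_2X_2+\lambda_3X_3+\lambda_4X_4$, $[X_1,X_3]=[X_2,X_4]=\lambda_4X_1-\lambda_3X_2+\lambda_2X_3-\lambda_1X_4$, $[X_2,X_3]=[X_1,X_4]=0$. $P$ is the left-invariant tensor with $PX_1=X_3$, $PX_2=X_4$, $PX_3=X_1$, $PX_4=X_2$, and $g$ the left-invariant metric making $\{X_i\}$ orthonormal. *)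

From Stdlib Require Import Reals.
Open Scope R_scope.

Inductive idx : Set := i1 | i2 | i3 | i4.

(* Left-invariant vector fields are identified with their (constant)
   coefficient vectors in the frame {X_1,...,X_4}: v = sum_k v k X_k. *)
Definition vec := idx -> R.

Definition sum4 (f : idx -> R) : R := f i1 + f i2 + f i3 + f i4.

Definition basis (i : idx) : vec :=
  fun k => match i, k with
           | i1, i1 | i2, i2 | i3, i3 | i4, i4 => 1
           | _, _ => 0 end.

Definition vadd (u v : vec) : vec := fun k => u k + v k.
Definition vscale (a : R) (v : vec) : vec := fun k => a * v k.
Definition vsub (u v : vec) : vec := fun k => u k - v k.

Definition vA (l1 l2 l3 l4 : R) : vec :=
  fun k => match k with i1 => l1 | i2 => l2 | i3 => l3 | i4 => l4 end.
Definition vB (l1 l2 l3 l4 : R) : vec :=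
  fun k => match k with i1 => l4 | i2 => - l3 | i3 => l2 | i4 => - l1 end.
Definition vzero : vec := fun _ => 0.
Definition vneg (v : vec) : vec := fun k => - v k.

Definition brk (l1 l2 l3 l4 : R) (i j : idx) : vec :=
  let A := vA l1 l2 l3 l4 in
  let B := vB l1 l2 l3 l4 in
  match i, j with
  | i1, i2 => A | i2, i1 => vneg A
  | i3, i4 => vneg A | i4, i3 => A
  | i1, i3 => B | i3, i1 => vneg B
  | i2, i4 => B | i4, i2 => vneg B
  | _, _ => vzero
  end.

Definition bracket (l1 l2 l3 l4 : R) (u v : vec) : vec :=
  fun k => sum4 (fun i => sum4 (fun j => u i * v j * brk l1 l2 l3 l4 i j k)).

(* The left-invariant metric g making {X_i} orthonormal. *)
Definition g (u v : vec) : R := sum4 (fun k => u k * v k).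

(* Levi-Civita connection of g on left-invariant fields, via the Koszul formula
   g(nabla_X Y, Z) = 1/2 (g([X,Y],Z) - g([Y,Z],X) + g([Z,X],Y)),
   expanded in the orthonormal frame: nabla_X Y = sum_k g(nabla_X Y, X_k) X_k. *)
Definition nabla (l1 l2 l3 l4 : R) (x y : vec) : vec :=
  fun k => / 2 * ( g (bracket l1 l2 l3 l4 x y) (basis k)
                 - g (bracket l1 l2 l3 l4 y (basis k)) x
                 + g (bracket l1 l2 l3 l4 (basis k) x) y ).

Definition curv (l1 l2 l3 l4 : R) (x y z : vec) : vec :=
  let nb := nabla l1 l2 l3 l4 in
  vsub (vsub (nb x (nb y z)) (nb y (nb x z))) (nb (bracket l1 l2 l3 l4 x y) z).

Definition Rm (l1 l2 l3 l4 : R) (x y z w : vec) : R := g (curv l1 l2 l3 l4 x y z) w.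

Definition Ric (l1 l2 l3 l4 : R) (y z : vec) : R :=
  sum4 (fun k => Rm l1 l2 l3 l4 (basis k) y z (basis k)).

Definition scal (l1 l2 l3 l4 : R) : R :=
  sum4 (fun i => Ric l1 l2 l3 l4 (basis i) (basis i)).

(* Weyl tensor in dimension n = 4:
   W = Rm - 1/(n-2) (Ric Kulkarni-Nomizu g) + s/(2(n-1)(n-2)) (g KN g), i.e.
   W(X,Y,Z,V) = R(X,Y,Z,V)
     - 1/2 ( Ric(Y,Z)g(X,V) - Ric(X,Z)g(Y,V) + Ric(X,V)g(Y,Z) - Ric(Y,V)g(X,Z) )
     + s/6 ( g(Y,Z)g(X,V) - g(X,Z)g(Y,V) ). *)
Definition Weyl (l1 l2 l3 l4 : R) (x y z v : vec) : R :=
  let Rc := Ric l1 l2 l3 l4 in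
  Rm l1 l2 l3 l4 x y z v
  - / 2 * ( Rc y z * g x v - Rc x z * g y v + Rc x v * g y z - Rc y v * g x z )
  + scal l1 l2 l3 l4 / 6 * ( g y z * g x v - g x z * g y v ).

(* In the orthonormal frame the curvature operator is computed from the
   Christoffel symbols, and one finds R = P ⊙ g (Kulkarni–Nomizu product),
   where the Schouten tensor is P = m ⊗ m - |λ|²/2 g with
   m = λ3 X1 + λ4 X2 - λ1 X3 - λ2 X4.
   In dimension 4 a curvature tensor of the form h ⊙ g has Ricci tensor
   2h + (tr h) g and scalar curvature 6 tr h, and its Weyl part cancels
   identically. *)

From Stdlib Require Import Reals FunctionalExtensionality.
Open Scope R_scope.

Lemma sum4_ext (f h : idx -> R) : (forall i, f i = h i) -> sum4 f = sum4 h.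
Proof. intro E; unfold sum4; rewrite !E; reflexivity. Qed.

Lemma sum4_sub (f h : idx -> R) : sum4 (fun i => f i - h i) = sum4 f - sum4 h.
Proof. unfold sum4; ring. Qed.

Lemma sum4_comm (f : idx -> idx -> R) :
  sum4 (fun a => sum4 (fun b => f a b)) = sum4 (fun b => sum4 (fun a => f a b)).
Proof. unfold sum4; ring. Qed.

Definition bilin (H : idx -> idx -> R) (u w : vec) : R :=
  sum4 (fun a => sum4 (fun b => u a * w b * H a b)).

Definition bimap (C : idx -> idx -> idx -> R) (x y : vec) : vec :=
  fun k => sum4 (fun i => sum4 (fun j => x i * y j * C i j k)).

Definition tensor4 (T : idx -> idx -> idx -> idx -> R) (x y z w : vec) : R :=
  sum4 (fun a => sum4 (fun b => sum4 (fun c => sum4 (fun d =>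
    x a * y b * z c * w d * T a b c d)))).

Lemma tensor4_ext (T U : idx -> idx -> idx -> idx -> R) x y z w :
  (forall a b c d, T a b c d = U a b c d) -> tensor4 T x y z w = tensor4 U x y z w.
Proof. intro TU; unfold tensor4, sum4; rewrite !TU; reflexivity. Qed.

Lemma tensor4_sub (T U : idx -> idx -> idx -> idx -> R) x y z w :
  tensor4 (fun a b c d => T a b c d - U a b c d) x y z w
  = tensor4 T x y z w - tensor4 U x y z w.
Proof.
  unfold tensor4.
  do 4 (rewrite <- sum4_sub; apply sum4_ext; intro).
  ring.
Qed.

Lemma tensor4_swap12 (T : idx -> idx -> idx -> idx -> R) x y z w :
  tensor4 T y x z w = tensor4 (fun a b c d => T b a c d) x y z w.
Proof.
  unfold tensor4; rewrite sum4_comm.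
  do 4 (apply sum4_ext; intro).
  ring.
Qed.

Definition kulkarni_nomizu (h : vec -> vec -> R) (x y z v : vec) : R :=
  h y z * g x v - h x z * g y v + h x v * g y z - h y v * g x z.

Definition kulkarni_nomizu_comp (H : idx -> idx -> R) (a b c d : idx) : R :=
  H b c * basis a d - H a c * basis b d + H a d * basis b c - H b d * basis a c.

Lemma tensor4_kulkarni_nomizu (H : idx -> idx -> R) x y z w :
  tensor4 (kulkarni_nomizu_comp H) x y z w = kulkarni_nomizu (bilin H) x y z w.
Proof.
  unfold tensor4, kulkarni_nomizu, kulkarni_nomizu_comp, bilin, g, sum4, basis.
  ring.
Qed.

Definition trace (H : idx -> idx -> R) : R := sum4 (fun a => H a a).

Lemma weyl_kulkarni_nomizu l1 l2 l3 l4 (H : idx -> idx -> R) :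
  (forall x y z w, Rm l1 l2 l3 l4 x y z w = kulkarni_nomizu (bilin H) x y z w) ->
  forall x y z v, Weyl l1 l2 l3 l4 x y z v = 0.
Proof.
  intros Rm_kn x y z v.
  assert (Ric_kn : forall u w,
      Ric l1 l2 l3 l4 u w = 2 * bilin H u w + trace H * g u w).
  { intros u w; unfold Ric, sum4; rewrite !Rm_kn.
    unfold kulkarni_nomizu, bilin, trace, g, sum4, basis; ring. }
  assert (scal_kn : scal l1 l2 l3 l4 = 6 * trace H).
  { unfold scal, sum4; rewrite !Ric_kn.
    unfold bilin, trace, g, sum4, basis; ring. }
  unfold Weyl; cbv zeta; rewrite Rm_kn, !Ric_kn, scal_kn.
  unfold kulkarni_nomizu; field.
Qed.

Definition curvature_comp (Gam C : idx -> idx -> idx -> R) (a b c d : idx) : R :=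
  sum4 (fun m => Gam b c m * Gam a m d - Gam a c m * Gam b m d - C a b m * Gam m c d).

Lemma g_bimap_bimap (Gam : idx -> idx -> idx -> R) x y z w :
  g (bimap Gam x (bimap Gam y z)) w
  = tensor4 (fun a b c d => sum4 (fun m => Gam b c m * Gam a m d)) x y z w.
Proof. unfold g, bimap, tensor4, sum4; ring. Qed.

Lemma g_bimap_bracket (Gam C : idx -> idx -> idx -> R) x y z w :
  g (bimap Gam (bimap C x y) z) w
  = tensor4 (fun a b c d => sum4 (fun m => C a b m * Gam m c d)) x y z w.
Proof. unfold g, bimap, tensor4, sum4; ring. Qed.

(* A connection with coefficients [Gam] and a bracket with structure constants [C]. *)
Lemma curvature_bimap (Gam C : idx -> idx -> idx -> R) x y z w :
  g (vsub (vsub (bimap Gam x (bimap Gam y z)) (bimap Gam y (bimap Gam x z)))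
          (bimap Gam (bimap C x y) z)) w
  = tensor4 (curvature_comp Gam C) x y z w.
Proof.
  assert (g_sub : forall u u' u'', g (vsub (vsub u u') u'') w = g u w - g u' w - g u'' w).
  { intros; unfold g, vsub, sum4; ring. }
  rewrite g_sub, !g_bimap_bimap, g_bimap_bracket, (tensor4_swap12 _ x y).
  rewrite <- !tensor4_sub.
  apply tensor4_ext; intros; unfold curvature_comp, sum4; ring.
Qed.

Definition christoffel (l1 l2 l3 l4 : R) (i j k : idx) : R :=
  / 2 * (brk l1 l2 l3 l4 i j k - brk l1 l2 l3 l4 j k i + brk l1 l2 l3 l4 k i j).

Lemma nabla_bimap l1 l2 l3 l4 : nabla l1 l2 l3 l4 = bimap (christoffel l1 l2 l3 l4).
Proof.
  apply functional_extensionality; intro x.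
  apply functional_extensionality; intro y.
  apply functional_extensionality; intro k.
  unfold nabla, bimap, christoffel, bracket, g, basis, sum4.
  generalize (brk l1 l2 l3 l4); intro C.
  destruct k; ring.
Qed.

Lemma Rm_tensor4 l1 l2 l3 l4 x y z w :
  Rm l1 l2 l3 l4 x y z w
  = tensor4 (curvature_comp (christoffel l1 l2 l3 l4) (brk l1 l2 l3 l4)) x y z w.
Proof.
  unfold Rm, curv; rewrite nabla_bimap.
  exact (curvature_bimap _ _ x y z w).
Qed.

Definition mvec (l1 l2 l3 l4 : R) : vec :=
  fun k => match k with i1 => l3 | i2 => l4 | i3 => - l1 | i4 => - l2 end.

Definition schouten (l1 l2 l3 l4 : R) (a b : idx) : R :=
  mvec l1 l2 l3 l4 a * mvec l1 l2 l3 l4 b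
  - (l1 ^ 2 + l2 ^ 2 + l3 ^ 2 + l4 ^ 2) / 2 * basis a b.

Lemma curvature_comp_schouten l1 l2 l3 l4 a b c d :
  curvature_comp (christoffel l1 l2 l3 l4) (brk l1 l2 l3 l4) a b c d
  = kulkarni_nomizu_comp (schouten l1 l2 l3 l4) a b c d.
Proof.
  destruct a, b, c, d;
  cbv [curvature_comp kulkarni_nomizu_comp christoffel schouten mvec sum4
       brk vA vB vneg vzero basis];
  field.
Qed.

Lemma Rm_schouten l1 l2 l3 l4 x y z w :
  Rm l1 l2 l3 l4 x y z w = kulkarni_nomizu (bilin (schouten l1 l2 l3 l4)) x y z w.
Proof.
  rewrite Rm_tensor4, <- tensor4_kulkarni_nomizu.
  apply tensor4_ext, curvature_comp_schouten.
Qed.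

Theorem proposition8p4 (l1 l2 l3 l4 : R) :
  forall x y z v : vec, Weyl l1 l2 l3 l4 x y z v = 0.
Proof. exact (weyl_kulkarni_nomizu _ _ _ _ _ (Rm_schouten l1 l2 l3 l4)). Qed.
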